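(* Let $G_1,G_2$ be finite graphs and let $f:V(G_2)\to V(G_1)$ be an $(a,b)$-uniform map for some $a,b\in\mathbb{N}$. Then $A(G_1)\prec A(G_2)/b$.
   Context: For a finite graph $G$, $A(G)$ is the operator on functions $v:V(G)\to\mathbb{R}$ (with the uniform probability measure on $V(G)$) given by $(vA(G))(i)=\sum_{(j,i)\in E(G)}v(j)$. A map $f:V(G_2)\to V(G_1)$ is $(a,b)$-uniform if it is a graph homomorphism, $|f^{-1}(v)|=a$ for all $v\in V(G_1)$, and for every $v\in V(G_2)$ and every neighbor $w$ of $f(v)$, exactly $b$ neighbors of $v$ are mapped to $w$. For an operator $B$, $\mathcal{S}_k(B)$ is the set of joint distributions on $\mathbb{R}^{2k}$ of $(v_1,\dots,v_k,v_1B,\dots,v_kB)$ over functions $v_i$ with values in $[-1,1]$, and $\mathcal{S}^*_k(B)$ its closure in the Lévy–Prokhorov metric. $B\prec C$ (weak containment) means $\mathcal{S}^*_k(B)\subseteq\mathcal{S}^*_k(C)$ for every $k\in\mathbb{N}$. *)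

From HB Require Import structures.
From mathcomp Require Import all_boot all_order all_algebra.
From mathcomp Require Import all_classical all_reals all_analysis.
Set Implicit Arguments. Unset Strict Implicit. Unset Printing Implicit Defensive.
Import Order.TTheory GRing.Theory Num.Theory.
Local Open Scope classical_set_scope.
Local Open Scope ring_scope.

Definition simple_graph (V : finType) (e : rel V) : Prop :=
  symmetric e /\ irreflexive e.

Definition graph_hom (V1 V2 : finType) (e1 : rel V1) (e2 : rel V2)
  (f : V2 -> V1) : Prop := forall x y, e2 x y -> e1 (f x) (f y).

Definition uniform_map (V1 V2 : finType) (e1 : rel V1) (e2 : rel V2)
  (f : V2 -> V1) (a b : nat) : Prop :=
  [/\ graph_hom e1 e2 f,
      (forall u : V1, #|[set x | f x == u]| = a) &
      (forall (v : V2) (w : V1), e1 (f v) w ->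
         #|[set x | e2 v x && (f x == w)]| = b)].

Definition adj_op (R : realType) (V : finType) (e : rel V)
  (v : V -> R) : V -> R := fun i => \sum_(j | e j i) v j.

(* The point (v_1(x),...,v_k(x),(v_1 B)(x),...,(v_k B)(x)) in R^{2k}. *)
Definition joint_point (R : realType) (V : finType)
  (B : (V -> R) -> (V -> R)) (k : nat) (v : 'I_k -> V -> R) (x : V)
  : (k + k).-tuple R :=
  [tuple (match fintype.split i with inl j => v j x | inr j => B (v j) x end)
   | i < k + k].

(* S_k(B): joint distributions (pushforwards of the uniform probability
   measure on V) of (v_1,...,v_k,v_1 B,...,v_k B), with v_i : V -> [-1,1]. *)
Definition S_k (R : realType) (V : finType) (B : (V -> R) -> (V -> R))
  (k : nat) : set (probability ((k + k).-tuple R) R) :=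
  [set mu | exists v : 'I_k -> V -> R,
     (forall j x, -1 <= v j x <= 1) /\
     (forall A : set ((k + k).-tuple R), measurable A ->
        mu A = ((\sum_(x : V) \1_A (joint_point B v x)) / #|V|%:R)%:E)].

Definition tdist (R : realType) (n : nat) (x y : n.-tuple R) : R :=
  \big[Num.max/0]_(i < n) `|tnth x i - tnth y i|.

Definition nbhd_eps (R : realType) (n : nat) (A : set (n.-tuple R)) (eps : R)
  : set (n.-tuple R) :=
  [set y | exists2 x, A x & tdist x y < eps].

Definition LP_dist (R : realType) (n : nat) (mu nu : probability (n.-tuple R) R)
  : \bar R :=
  ereal_inf [set eps%:E | eps in [set eps : R | 0 < eps /\
     (forall A : set (n.-tuple R), measurable A ->
        (mu A <= nu (nbhd_eps A eps) + eps%:E)%E /\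
        (nu A <= mu (nbhd_eps A eps) + eps%:E)%E)]].

Definition LP_closure (R : realType) (n : nat) (S : set (probability (n.-tuple R) R))
  : set (probability (n.-tuple R) R) :=
  [set mu | forall eps : R, 0 < eps ->
     exists2 nu, S nu & (LP_dist mu nu < eps%:E)%E].

Definition S_k_star (R : realType) (V : finType) (B : (V -> R) -> (V -> R))
  (k : nat) := LP_closure (@S_k R V B k).

Definition weakly_contained (R : realType) (V W : finType)
  (B : (V -> R) -> (V -> R)) (C : (W -> R) -> (W -> R)) : Prop :=
  forall k : nat, @S_k_star R V B k `<=` @S_k_star R W C k.

From HB Require Import structures.
From mathcomp Require Import all_boot all_order all_algebra.
From mathcomp Require Import all_classical all_reals all_analysis.
Set Implicit Arguments.
Unset Strict Implicit.
Unset Printing Implicit Defensive.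
Import Order.TTheory GRing.Theory Num.Theory.
Local Open Scope ring_scope.

(* Pulling back along an (a,b)-uniform map f multiplies the adjacency
   operator by b: (v o f) A(G2) = b ((v A(G1)) o f), because every neighbour w
   of f y has exactly b preimages among the neighbours of y.  So the joint
   point of the functions v_i o f under A(G2)/b at y is the joint point of the
   v_i under A(G1) at f y, and as all fibres of f have the same size a, the two
   empirical distributions coincide.  Thus S_k(A(G1)) is contained in
   S_k(A(G2)/b), and taking Levy-Prokhorov closures preserves inclusion. *)

Lemma card_classic_set (T : finType) (P : pred T) :
  #|[set x | P x]%classic| = #|P|.
Proof. by apply: eq_card => x; rewrite /in_mem /= /in_set asboolb. Qed.

Lemma sumr_fibers (R : nmodType) (I J : finType) (f : I -> J) (P : pred I)
    (F : J -> R) :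
  \sum_(i | P i) F (f i) = \sum_j F j *+ #|[set i | P i & f i == j]|.
Proof.
rewrite (partition_big f predT) //=; apply: eq_bigr => j _.
rewrite (eq_bigr (fun _ => F j)); last by move=> i /andP[_ /eqP ->].
by rewrite sumr_const; congr (_ *+ _); apply: eq_card => i; rewrite !inE.
Qed.

Lemma LP_closure_subset (R : realType) (n : nat)
    (S T : set (probability (n.-tuple R) R)) :
  (S `<=` T)%classic -> (LP_closure S `<=` LP_closure T)%classic.
Proof.
move=> ST mu muS eps eps_gt0; have [nu Snu dnu] := muS eps eps_gt0.
by exists nu => //; apply: ST.
Qed.

Section UniformMap.

Variables (R : realType) (V1 V2 : finType) (e1 : rel V1) (e2 : rel V2).
Variables (f : V2 -> V1) (a b : nat).
Hypotheses (e1_sym : symmetric e1) (e2_sym : symmetric e2).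
Hypothesis f_uniform : uniform_map e1 e2 f a b.

Let scaled_adj (v : V2 -> R) (i : V2) := adj_op e2 v i / b%:R.

Lemma sumr_uniform_comp (M : nmodType) (F : V1 -> M) :
  \sum_y F (f y) = \sum_x F x *+ a.
Proof.
have [_ fibre_card _] := f_uniform.
rewrite sumr_fibers; apply: eq_bigr => x _; congr (_ *+ _).
by rewrite -(fibre_card x) card_classic_set; apply: eq_card => y; rewrite !inE.
Qed.

Lemma card_uniform_domain : #|V2| = (a * #|V1|)%N.
Proof.
rewrite -sum1_card (@sumr_uniform_comp nat (fun _ => 1%N)).
by rewrite sumr_const -mulrnA natn.
Qed.

Lemma adj_op_comp_uniform (v : V1 -> R) (y : V2) :
  adj_op e2 (v \o f) y = adj_op e1 v (f y) *+ b.
Proof.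
have [f_hom _ nbr_card] := f_uniform.
rewrite /adj_op (sumr_fibers f) [LHS](bigID (fun w => e1 w (f y))) /= -sumrMnl.
rewrite [X in _ + X]big1 ?addr0 => [|w /negbTE not_nbr]; last first.
  rewrite (_ : #|_| = 0%N) ?mulr0n //; apply/eqP; rewrite cards_eq0.
  apply/eqP/setP => x; rewrite !inE; apply/negbTE/andP => -[exy /eqP fxw].
  by move: (f_hom _ _ exy); rewrite fxw not_nbr.
apply: eq_bigr => w ew; congr (_ *+ _).
rewrite -(nbr_card y w) ?card_classic_set; last by rewrite e1_sym.
by apply: eq_card => x; rewrite !inE e2_sym.
Qed.

Lemma joint_point_comp_uniform (k : nat) (v : 'I_k -> V1 -> R) (y : V2) :
  (0 < b)%N ->
  joint_point scaled_adj (fun j => v j \o f) y = joint_point (adj_op e1) v (f y).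
Proof.
move=> b_gt0; apply: eq_from_tnth => i; rewrite !tnth_mktuple.
case: fintype.split => j //=.
rewrite /scaled_adj adj_op_comp_uniform -[_ *+ b]mulr_natr.
by rewrite mulfK // pnatr_eq0 -lt0n.
Qed.

Lemma S_k_uniform_subset (k : nat) :
  (0 < b)%N -> (0 < #|V2|)%N ->
  (S_k (adj_op e1) (k := k) `<=` S_k scaled_adj (k := k))%classic.
Proof.
move=> b_gt0 V2_gt0 mu [v [v_bounded mu_def]].
exists (fun j => v j \o f); split=> [j y|A mA]; first exact: v_bounded.
rewrite mu_def //; congr (_%:E).
under [in RHS]eq_bigr => y _ do rewrite joint_point_comp_uniform //.
rewrite (sumr_uniform_comp (fun x => \1_A (joint_point (adj_op e1) v x))).
have := V2_gt0; rewrite card_uniform_domain muln_gt0 => /andP[a_gt0 _].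
rewrite sumrMnl natrM invfM -[_ *+ a]mulr_natr mulrA.
by rewrite mulfK // pnatr_eq0 -lt0n.
Qed.

End UniformMap.

Theorem lemma12p2 (R : realType) (V1 V2 : finType) (e1 : rel V1) (e2 : rel V2)
  (f : V2 -> V1) (a b : nat) :
  simple_graph e1 -> simple_graph e2 ->
  (0 < #|V1|)%N -> (0 < #|V2|)%N -> (0 < b)%N ->
  uniform_map e1 e2 f a b ->
  weakly_contained (adj_op (R := R) e1)
    (fun (v : V2 -> R) (i : V2) => adj_op e2 v i / b%:R).
Proof.
move=> [e1_sym _] [e2_sym _] _ V2_gt0 b_gt0 f_uniform k.
exact/LP_closure_subset/(S_k_uniform_subset e1_sym e2_sym f_uniform).
Qed.
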